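(* Let $M_1,M_2\in\mathbb{S}^n$ and let $$\mathcal{T}(\{M_1,M_2\})=\{X\in\mathbb{S}^n_+:\ \langle M_1,X\rangle=0,\ \langle M_2,X\rangle=0\}.$$ If $\mathcal{T}(\{M_1,M_2\})$ is rank-one generated, then one of the following holds: (i) there exists $(\alpha_1,\alpha_2)\neq(0,0)$ such that $\alpha_1M_1+\alpha_2M_2\in\mathbb{S}^n_+$, or (ii) there exist $a,b,c\in\mathbb{R}^n$ such that $M_1=\mathrm{Sym}(ac^\top)$ and $M_2=\mathrm{Sym}(bc^\top)$.
   Context: $\mathbb{S}^n$ is the space of real symmetric $n\times n$ matrices with inner product $\langle A,B\rangle=\mathrm{tr}(AB)$, and $\mathbb{S}^n_+$ the cone of positive semidefinite matrices. For $M\in\mathbb{R}^{n\times n}$, $\mathrm{Sym}(M)=(M+M^\top)/2$. A closed convex cone $\mathcal{S}\subseteq\mathbb{S}^n_+$ is called rank-one generated (ROG) if $\mathcal{S}=\mathrm{conv}(\mathcal{S}\cap\{xx^\top: x\in\mathbb{R}^n\})$. *)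

From mathcomp Require Import all_boot all_order all_algebra.
From mathcomp Require Import reals.
Set Implicit Arguments. Unset Strict Implicit. Unset Printing Implicit Defensive.
Import Order.TTheory GRing.Theory Num.Theory.
Local Open Scope ring_scope.

Section Defs.
Variable (R : realType) (n : nat).

Definition symmx (M : 'M[R]_n) : Prop := M^T = M.

Definition psdmx (M : 'M[R]_n) : Prop :=
  symmx M /\ forall x : 'cV[R]_n, 0 <= (x^T *m M *m x) 0 0.

Definition frob (A B : 'M[R]_n) : R := \tr (A *m B).

Definition Symm (M : 'M[R]_n) : 'M[R]_n := 2^-1 *: (M + M^T).

Definition Tcone (M1 M2 : 'M[R]_n) (X : 'M[R]_n) : Prop :=
  psdmx X /\ frob M1 X = 0 /\ frob M2 X = 0.

Definition conv_rank_one (S : 'M[R]_n -> Prop) (X : 'M[R]_n) : Prop :=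
  exists (k : nat) (w : 'I_k -> R) (x : 'I_k -> 'cV[R]_n),
    (forall i, 0 <= w i) /\ \sum_(i < k) w i = 1 /\
    (forall i, S (x i *m (x i)^T)) /\
    X = \sum_(i < k) w i *: (x i *m (x i)^T).

Definition ROG (S : 'M[R]_n -> Prop) : Prop :=
  forall X, S X <-> conv_rank_one S X.

End Defs.

(* Write q_i(x) = x^T M_i x and b_i for the associated bilinear forms. If no nonzero
   combination a1 M1 + a2 M2 is PSD, the image of x |-> (q_1 x, q_2 x) lies in no
   closed half-plane, so -(tr M1, tr M2) is a conic combination of two of its points
   and T contains a positive definite X = I + mu v1 v1^T + nu v2 v2^T. Rank-one
   generation writes X = sum w_i u_i u_i^T with q_1(u_i) = q_2(u_i) = 0 and the u_i
   spanning R^n.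
   The obstruction to rank-one generation is a plane on which the restricted pencil
   admits a positive definite matrix orthogonal to both forms but no isotropic
   vector. If for some k = u_i the map y |-> (b_1(k,y), b_2(k,y)) is onto, perturbing
   k must never produce such a plane; this forces (q_1 y, q_2 y) to be parallel to
   (b_1(k,y), b_2(k,y)) for every y, whence M_j = Sym((M_j k) c^T). Otherwise all
   these maps have rank at most one, and excluding the plane spanned by
   u_a + 2 u_b + 2 u_c and -u_a + 2 u_b + 2 u_e shows that all the vectors
   (b_1(u_i,u_j), b_2(u_i,u_j)) are parallel to one (D1, D2) <> 0; as the u_i span,
   D2 M1 = D1 M2. *)

From mathcomp Require Import all_boot all_order all_algebra.
From mathcomp Require Import boolp classical_sets reals.
From mathcomp Require Import ring lra.
Import Order.TTheory GRing.Theory Num.Theory.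
Local Open Scope ring_scope.
Set Implicit Arguments. Unset Strict Implicit. Unset Printing Implicit Defensive.

Section BilinearForm.
Variables (R : realType) (n : nat).
Implicit Types (M N X : 'M[R]_n) (x y z w : 'cV[R]_n).

Definition bform M x y : R := (x^T *m M *m y) 0 0.
Definition dot x y : R := (x^T *m y) 0 0.

Lemma bformDl M x y z : bform M (x + y) z = bform M x z + bform M y z.
Proof. by rewrite /bform linearD /= !mulmxDl mxE. Qed.
Lemma bformDr M x y z : bform M x (y + z) = bform M x y + bform M x z.
Proof. by rewrite /bform !mulmxDr mxE. Qed.
Lemma bformZl M a x y : bform M (a *: x) y = a * bform M x y.
Proof. by rewrite /bform linearZ /= -!scalemxAl mxE. Qed.
Lemma bformZr M a x y : bform M x (a *: y) = a * bform M x y.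
Proof. by rewrite /bform -!scalemxAr mxE. Qed.
Lemma bformNl M x y : bform M (- x) y = - bform M x y.
Proof. by rewrite -scaleN1r bformZl mulN1r. Qed.
Lemma bformNr M x y : bform M x (- y) = - bform M x y.
Proof. by rewrite -scaleN1r bformZr mulN1r. Qed.
Lemma bformBl M x y z : bform M (x - y) z = bform M x z - bform M y z.
Proof. by rewrite bformDl bformNl. Qed.
Lemma bformBr M x y z : bform M x (y - z) = bform M x y - bform M x z.
Proof. by rewrite bformDr bformNr. Qed.
Lemma bform0r M x : bform M x 0 = 0.
Proof. by rewrite /bform !mulmx0 mxE. Qed.

Lemma bformMD M N x y : bform (M + N) x y = bform M x y + bform N x y.
Proof. by rewrite /bform mulmxDr mulmxDl mxE. Qed.
Lemma bformMZ a M x y : bform (a *: M) x y = a * bform M x y.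
Proof. by rewrite /bform -scalemxAr -scalemxAl mxE. Qed.

Lemma bformC M x y : M^T = M -> bform M x y = bform M y x.
Proof.
move=> sM; rewrite /bform.
transitivity ((x^T *m M *m y)^T 0 0); first by rewrite [RHS]mxE.
by rewrite !trmx_mul trmxK sM mulmxA.
Qed.

Lemma bform_comb2 M s t f g : M^T = M ->
  bform M (s *: f + t *: g) (s *: f + t *: g) =
  s ^+ 2 * bform M f f + 2 * s * t * bform M f g + t ^+ 2 * bform M g g.
Proof. by move=> sM; rewrite !(bformDl, bformDr, bformZl, bformZr) (bformC g f sM); ring. Qed.

Lemma bform_comb3 M z e f s t : M^T = M ->
  bform M (z + s *: e + t *: f) (z + s *: e + t *: f) =
  bform M z z + s ^+ 2 * bform M e e + t ^+ 2 * bform M f f + 2 * s * bform M e z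
  + 2 * t * bform M f z + 2 * s * t * bform M e f.
Proof.
move=> sM; rewrite !(bformDl, bformDr, bformZl, bformZr).
by rewrite (bformC z e sM) (bformC z f sM) (bformC f e sM); ring.
Qed.

Lemma bform1 x y : bform 1%:M x y = dot x y.
Proof. by rewrite /bform /dot mulmx1. Qed.

Lemma bform_dot M x y : M^T = M -> bform M x y = dot (M *m x) y.
Proof. by move=> sM; rewrite /bform /dot trmx_mul sM. Qed.

Lemma dotC x y : dot x y = dot y x.
Proof. by rewrite -!bform1 bformC ?trmx1. Qed.

Lemma dot0l y : dot 0 y = 0.
Proof. by rewrite /dot linear0 mul0mx mxE. Qed.

Lemma dot_mx11 x y : x^T *m y = (dot x y)%:M.
Proof. exact: mx11_scalar. Qed.

Lemma bform_rank1 x y z w : bform (x *m y^T) z w = dot z x * dot y w.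
Proof.
by rewrite /bform !mulmxA -(mulmxA (z^T *m x)) [z^T *m x]dot_mx11 mul_scalar_mx mxE.
Qed.

Lemma dotxx x : dot x x = \sum_i x i 0 ^+ 2.
Proof. by rewrite /dot mxE; apply: eq_bigr => i _; rewrite mxE expr2. Qed.

Lemma dot_ge0 x : 0 <= dot x x.
Proof. by rewrite dotxx sumr_ge0 // => i _; rewrite sqr_ge0. Qed.

Lemma dot_eq0 x : dot x x = 0 -> x = 0.
Proof.
rewrite dotxx => /eqP; rewrite psumr_eq0 => [/allP x0|i _]; last by rewrite sqr_ge0.
apply/matrixP => i j; rewrite (ord1 j) mxE.
by have := x0 i (mem_index_enum _); rewrite sqrf_eq0 => /eqP.
Qed.

Lemma bform_sumr M I (r : seq I) (P : pred I) (F : I -> 'cV[R]_n) x :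
  bform M x (\sum_(i <- r | P i) F i) = \sum_(i <- r | P i) bform M x (F i).
Proof. exact: (big_morph _ (bformDr M x) (bform0r M x)). Qed.

Lemma bform_suml M I (r : seq I) (P : pred I) (F : I -> 'cV[R]_n) y :
  bform M (\sum_(i <- r | P i) F i) y = \sum_(i <- r | P i) bform M (F i) y.
Proof.
have bform0l x : bform M 0 x = 0 by rewrite /bform linear0 !mul0mx mxE.
exact: (big_morph (bform M ^~ y) (fun a b => bformDl M a b y) (bform0l y)).
Qed.

Lemma bform_lincomb M k (c : 'I_k -> R) (u : 'I_k -> 'cV[R]_n) :
  bform M (\sum_i c i *: u i) (\sum_i c i *: u i) =
  \sum_i \sum_j (c i * c j) * bform M (u i) (u j).
Proof.
rewrite bform_suml; apply: eq_bigr => i _.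
rewrite bformZl bform_sumr mulr_sumr; apply: eq_bigr => j _.
by rewrite bformZr mulrA.
Qed.

Lemma frobD M X X' : frob M (X + X') = frob M X + frob M X'.
Proof. by rewrite /frob mulmxDr mxtraceD. Qed.
Lemma frobZ M a X : frob M (a *: X) = a * frob M X.
Proof. by rewrite /frob -scalemxAr mxtraceZ. Qed.
Lemma frob1 M : frob M 1%:M = \tr M.
Proof. by rewrite /frob mulmx1. Qed.

Lemma frob_sum M I (r : seq I) (P : pred I) (F : I -> 'M[R]_n) :
  frob M (\sum_(i <- r | P i) F i) = \sum_(i <- r | P i) frob M (F i).
Proof. by apply: (big_morph (frob M) (frobD M)); rewrite /frob mulmx0 mxtrace0. Qed.

Lemma frob_rank1 M x y : frob M (x *m y^T) = bform M y x.
Proof. by rewrite /frob /bform mulmxA mxtrace_mulC mulmxA trace_mx11. Qed.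

Lemma bform_gram (E : 'M[R]_n) x y : bform (E^T *m E) x y = dot (E *m x) (E *m y).
Proof. by rewrite /bform /dot trmx_mul !mulmxA. Qed.

Lemma bform_inj M N : M^T = M -> N^T = N ->
  (forall y, bform M y y = bform N y y) -> M = N.
Proof.
move=> sM sN MN; apply/matrixP => i j.
have bform_delta K : bform K (delta_mx i 0) (delta_mx j 0) = K i j.
  by rewrite /bform trmx_delta -rowE -colE !mxE.
rewrite -!bform_delta.
set u := delta_mx i 0 : 'cV[R]_n; set v := delta_mx j 0 : 'cV[R]_n.
have polar K : K^T = K ->
    bform K u v = 2^-1 * (bform K (u + v) (u + v) - bform K u u - bform K v v).
  by move=> sK; rewrite !bformDl !bformDr (bformC v u sK); field.
by rewrite (polar M sM) (polar N sN) !MN.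
Qed.

Lemma Symm_rank1_sym x y : (Symm (x *m y^T))^T = Symm (x *m y^T).
Proof. by rewrite /Symm linearZ /= linearD /= trmxK addrC. Qed.

Lemma bform_Symm_rank1 x y z : bform (Symm (x *m y^T)) z z = dot x z * dot y z.
Proof.
by rewrite /Symm bformMZ bformMD trmx_mul trmxK !bform_rank1 (dotC z x) (dotC z y); field.
Qed.

Lemma psdmx0 : psdmx (0 : 'M[R]_n).
Proof. by split=> [|x]; rewrite ?/symmx ?trmx0 // mulmx0 mul0mx mxE. Qed.

Lemma unitmx_of_dot_le_bform X : (forall x, dot x x <= bform X x x) -> X \in unitmx.
Proof.
move=> dotX; rewrite -row_free_unit; apply: inj_row_free => v vX.
have /dot_eq0 : dot v^T v^T = 0.
  apply/eqP; rewrite eq_le dot_ge0 andbT (le_trans (dotX _)) //.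
  by rewrite /bform trmxK vX !mul0mx mxE.
by move/(congr1 trmx); rewrite trmxK trmx0.
Qed.

Lemma rank1_decomp_span k (w : 'I_k -> R) (u : 'I_k -> 'cV[R]_n) X :
  X \in unitmx -> X = \sum_i w i *: (u i *m (u i)^T) ->
  forall y, exists c : 'I_k -> R, y = \sum_i c i *: u i.
Proof.
move=> Xu EX y; exists (fun i => w i * dot (u i) (invmx X *m y)).
rewrite -{1}(mulKVmx Xu y) {1}EX mulmx_suml; apply: eq_bigr => i _.
by rewrite -scalemxAl -mulmxA dot_mx11 mul_mx_scalar scalerA.
Qed.

Lemma rank1_decomp_kernel k (w : 'I_k -> R) (u : 'I_k -> 'cV[R]_n) (E : 'M[R]_n) :
  (forall i, 0 <= w i) -> frob (E^T *m E) (\sum_i w i *: (u i *m (u i)^T)) = 0 ->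
  forall i, w i != 0 -> E *m u i = 0.
Proof.
move=> w0; rewrite frob_sum => sum0 i wi; apply: dot_eq0.
have sum0' : \sum_j w j * dot (E *m u j) (E *m u j) = 0.
  by rewrite -[RHS]sum0; apply: eq_bigr => j _; rewrite frobZ frob_rank1 bform_gram.
have /(_ i isT) /eqP := psumr_eq0P (fun j _ => mulr_ge0 (w0 j) (dot_ge0 (E *m u j))) sum0'.
by rewrite mulf_eq0 (negbTE wi) => /eqP.
Qed.

End BilinearForm.

Section RealAlgebra.
Variable R : realFieldType.
Implicit Types a b c x y s t : R.

Definition det2 (a1 a2 b1 b2 : R) := a1 * b2 - a2 * b1.

Lemma det2_indep_eq0 (p1 p2 x1 x2 r1 r2 : R) :
  det2 p1 p2 x1 x2 = 0 -> det2 x1 x2 r1 r2 = 0 -> det2 p1 p2 r1 r2 != 0 ->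
  x1 = 0 /\ x2 = 0.
Proof.
rewrite /det2 => px xr pr.
have ex1 : (p1 * r2 - p2 * r1) * x1 = (x1 * r2 - x2 * r1) * p1 + (p1 * x2 - p2 * x1) * r1.
  by ring.
have ex2 : (p1 * r2 - p2 * r1) * x2 = (x1 * r2 - x2 * r1) * p2 + (p1 * x2 - p2 * x1) * r2.
  by ring.
move: ex1 ex2; rewrite px xr !(mul0r, addr0) => /eqP + /eqP.
by rewrite !mulf_eq0 (negbTE pr) /= => /eqP -> /eqP ->.
Qed.

Lemma quad2_ge0 a b c x y : 0 < a -> b ^+ 2 < a * c ->
  0 <= a * x ^+ 2 + 2 * b * x * y + c * y ^+ 2.
Proof.
move=> a0 abc; rewrite -(pmulr_rge0 _ a0).
have -> : a * (a * x ^+ 2 + 2 * b * x * y + c * y ^+ 2) =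
          (a * x + b * y) ^+ 2 + (a * c - b ^+ 2) * y ^+ 2 by ring.
by rewrite addr_ge0 ?sqr_ge0 // mulr_ge0 ?sqr_ge0 // subr_ge0 ltW.
Qed.

Lemma quad2_gt0 a b c x y : 0 < a -> b ^+ 2 < a * c -> x != 0 ->
  0 < a * x ^+ 2 + 2 * b * x * y + c * y ^+ 2.
Proof.
move=> a0 abc x0; rewrite lt_def quad2_ge0 // andbT.
apply: contra x0 => /eqP q0.
have ac0 : 0 < a * c - b ^+ 2 by rewrite subr_gt0.
have : (a * x + b * y) ^+ 2 + (a * c - b ^+ 2) * y ^+ 2 = 0.
  by rewrite -[RHS](mulr0 a) -q0; ring.
move/eqP; rewrite (paddr_eq0 (sqr_ge0 _) (mulr_ge0 (ltW ac0) (sqr_ge0 _))).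
rewrite !sqrf_eq0 mulf_eq0 (gt_eqF ac0) sqrf_eq0 /= => /andP[axby /eqP y0].
by move: axby; rewrite y0 mulr0 addr0 mulf_eq0 (gt_eqF a0).
Qed.

Lemma plane_isotropic_eq0 (p1 p2 b1 b2 r1 r2 s t : R) :
  det2 p1 p2 r1 r2 ^+ 2 < 4 * det2 b1 b2 r1 r2 * det2 p1 p2 b1 b2 ->
  s ^+ 2 * p1 + 2 * s * t * b1 + t ^+ 2 * r1 = 0 ->
  s ^+ 2 * p2 + 2 * s * t * b2 + t ^+ 2 * r2 = 0 ->
  s = 0 /\ t = 0.
Proof.
set d0 := det2 p1 p2 r1 r2; set d1 := det2 b1 b2 r1 r2; set d2 := det2 p1 p2 b1 b2.
move=> obs; set Q1 := _ + t ^+ 2 * r1; set Q2 := _ + t ^+ 2 * r2; move=> q1 q2.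
have e0 : s ^+ 2 * d0 + 2 * s * t * d1 = r2 * Q1 - r1 * Q2.
  by rewrite /Q1 /Q2 /d0 /d1 /det2; ring.
have e1 : 2 * s * t * d2 + t ^+ 2 * d0 = p1 * Q2 - p2 * Q1.
  by rewrite /Q1 /Q2 /d0 /d2 /det2; ring.
have e2 : s ^+ 2 * d2 - t ^+ 2 * d1 = b2 * Q1 - b1 * Q2.
  by rewrite /Q1 /Q2 /d1 /d2 /det2; ring.
rewrite q1 q2 !mulr0 subrr in e0 e1 e2.
have d12 : 0 < d1 * d2 by have := sqr_ge0 d0; lra.
have st0 : s * t = 0.
  have : (s * t) ^+ 2 * (4 * d1 * d2 - d0 ^+ 2) = 0.
    have -> : (s * t) ^+ 2 * (4 * d1 * d2 - d0 ^+ 2) =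
      (2 * s * t * d1) * (2 * s * t * d2) - (s ^+ 2 * d0) * (t ^+ 2 * d0) by ring.
    have -> : s ^+ 2 * d0 = - (2 * s * t * d1) by apply/eqP; rewrite -addr_eq0 e0.
    have -> : t ^+ 2 * d0 = - (2 * s * t * d2) by apply/eqP; rewrite -addr_eq0 addrC e1.
    ring.
  move/eqP; rewrite mulf_eq0 sqrf_eq0 => /orP[/eqP //|/eqP]; lra.
have d1n : d1 != 0 by apply: contraTneq d12 => ->; rewrite mul0r ltxx.
have d2n : d2 != 0 by apply: contraTneq d12 => ->; rewrite mulr0 ltxx.
move/eqP: st0; rewrite mulf_eq0 => /orP[/eqP s0|/eqP t0]; split => //.
- move/eqP: e2; rewrite s0 expr0n mul0r sub0r oppr_eq0 mulf_eq0 (negbTE d1n) orbF.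
  by rewrite sqrf_eq0 => /eqP.
- move/eqP: e2; rewrite t0 expr0n mul0r subr0 mulf_eq0 (negbTE d2n) orbF.
  by rewrite sqrf_eq0 => /eqP.
Qed.

Lemma cross_coef_posdef (d0 d1 d2 : R) : d0 ^+ 2 < 4 * d1 * d2 ->
  0 < 2 * d1 ^+ 2 /\ (- d0 * d1) ^+ 2 < 2 * d1 ^+ 2 * (2 * d1 * d2).
Proof.
move=> d012; have d1n : d1 != 0.
  by apply: contraTneq d012 => ->; rewrite mulr0 mul0r ltNge sqr_ge0.
have d1sq : 0 < d1 ^+ 2 by rewrite exprn_even_gt0.
split; first by rewrite mulr_gt0.
have -> : (- d0 * d1) ^+ 2 = d1 ^+ 2 * d0 ^+ 2 by ring.
have -> : 2 * d1 ^+ 2 * (2 * d1 * d2) = d1 ^+ 2 * (4 * d1 * d2) by ring.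
by rewrite ltr_pM2l.
Qed.

Lemma poly_cubic2_eq0 (a1 a2 a3 b1 b2 b3 c1 c2 c3 : R) :
  (forall s t, t * (a1 + a2 * t + a3 * t ^+ 2) + s * (b1 + b2 * s + b3 * s ^+ 2)
               + s * t * (c1 + c2 * s + c3 * t) = 0) ->
  [/\ a1 = 0, a2 = 0, a3 = 0 & [/\ b1 = 0, b2 = 0, b3 = 0 & [/\ c1 = 0, c2 = 0 & c3 = 0]]].
Proof.
move=> P.
move: (P 0 1) (P 0 (-1)) (P 0 2) (P 1 0) (P (-1) 0) (P 2 0) (P 1 1) (P 1 (-1)) (P (-1) 1).
rewrite !(mul0r, mulr0, add0r, addr0, mul1r, mulr1, mulN1r, mulrN1, expr1n, sqrrN, opprK).
by move=> *; split; [lra|lra|lra|split; [lra|lra|lra|split; lra]].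
Qed.

(* Take [d = c1 / K] with [K = 1 + |c2| + |c3 c1| + |c4 c1^2|]. *)
Lemma exists_quartic_gt0 (c1 c2 c3 c4 : R) : c1 != 0 ->
  exists d, 0 < c1 * d + c2 * d ^+ 2 + c3 * d ^+ 3 + c4 * d ^+ 4.
Proof.
move=> c1n.
pose a2 := `|c2|; pose a3 := `|c3 * c1|; pose a4 := `|c4 * c1 ^+ 2|.
pose K := 1 + a2 + a3 + a4.
have [a2p a3p a4p] : [/\ 0 <= a2, 0 <= a3 & 0 <= a4] by rewrite !normr_ge0.
have h2 : - a2 <= c2 := lerNnormlW (lexx _).
have h3 : - a3 <= c3 * c1 := lerNnormlW (lexx _).
have h4 : - a4 <= c4 * c1 ^+ 2 := lerNnormlW (lexx _).
have K1 : 1 <= K by rewrite /K; lra.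
have Kn : K != 0 by apply: contraTneq K1 => ->; rewrite ler10.
exists (c1 / K).
have -> : c1 * (c1 / K) + c2 * (c1 / K) ^+ 2 + c3 * (c1 / K) ^+ 3 + c4 * (c1 / K) ^+ 4
  = (c1 ^+ 2 / K ^+ 4) * (K ^+ 3 + c2 * K ^+ 2 + (c3 * c1) * K + c4 * c1 ^+ 2).
  by field.
apply: mulr_gt0.
  by rewrite divr_gt0 ?exprn_even_gt0 // exprn_gt0 // (lt_le_trans ltr01).
have KK : K <= K ^+ 2 by rewrite expr2 ler_peMl // (le_trans ler01).
have : K ^+ 2 * (K - a2 - a3 - a4) <= K ^+ 3 + c2 * K ^+ 2 + c3 * c1 * K + c4 * c1 ^+ 2.
  by nra.
by apply: lt_le_trans; rewrite /K mulr_gt0 ?exprn_gt0 //; lra.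
Qed.

End RealAlgebra.

Section ConicHull2.
Variables (R : realType) (S : R -> R -> Prop).
Hypothesis S_not_halfplane : forall l1 l2 : R, (l1, l2) != (0, 0) ->
  exists s1 s2, S s1 s2 /\ l1 * s1 + l2 * s2 < 0.

Definition conic2 (w1 w2 : R) := exists a1 a2 b1 b2 mu nu,
  [/\ S a1 a2, S b1 b2, 0 <= mu, 0 <= nu &
      w1 = mu * a1 + nu * b1 /\ w2 = mu * a2 + nu * b2].

Lemma conic2_collinear (w1 w2 s1 s2 t1 t2 al be : R) :
  S s1 s2 -> S t1 t2 -> 0 <= al -> 0 <= be ->
  w1 * (al * s2 + be * t2) = w2 * (al * s1 + be * t1) ->
  0 < w1 * (al * s1 + be * t1) + w2 * (al * s2 + be * t2) -> conic2 w1 w2.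
Proof.
set v1 := al * s1 + be * t1; set v2 := al * s2 + be * t2; set X := w1 * v1 + w2 * v2.
move=> Ss St al0 be0 Y0 X0; pose r := (w1 ^+ 2 + w2 ^+ 2) / X.
have r0 : 0 <= r by apply: divr_ge0; [rewrite addr_ge0 ?sqr_ge0 | exact: ltW].
exists s1, s2, t1, t2, (r * al), (r * be); split=> //; try exact: mulr_ge0.
have Xn : X != 0 by rewrite gt_eqF.
have -> : r * al * s1 + r * be * t1 = (w1 ^+ 2 + w2 ^+ 2) * v1 / X by rewrite /r /v1; ring.
have -> : r * al * s2 + r * be * t2 = (w1 ^+ 2 + w2 ^+ 2) * v2 / X by rewrite /r /v2; ring.
split; apply: (canRL (mulfK Xn)).
- transitivity (w1 ^+ 2 * v1 + w2 * (w1 * v2)); first by rewrite /X; ring.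
  by rewrite Y0; ring.
- transitivity (w2 ^+ 2 * v2 + w1 * (w2 * v1)); first by rewrite /X; ring.
  by rewrite -Y0; ring.
Qed.

Lemma conic2_ray w1 w2 s1 s2 :
  S s1 s2 -> w1 * s2 - w2 * s1 = 0 -> 0 < w1 * s1 + w2 * s2 -> conic2 w1 w2.
Proof.
move=> Ss Y0 X0; apply: (conic2_collinear (al := 1) (be := 0) Ss Ss) => //.
  by rewrite !mul1r !mul0r !addr0; lra.
by rewrite !mul1r !mul0r !addr0.
Qed.

Lemma conic2_pair w1 w2 s1 s2 t1 t2 :
  S s1 s2 -> S t1 t2 -> 0 < w1 * s2 - w2 * s1 -> w1 * t2 - w2 * t1 < 0 ->
  (w1 * t1 + w2 * t2) / (w1 * t2 - w2 * t1) < (w1 * s1 + w2 * s2) / (w1 * s2 - w2 * s1) ->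
  conic2 w1 w2.
Proof.
move=> Ss St Ys Yt; rewrite ltr_pdivlMr // mulrAC ltr_ndivrMr // => slope.
apply: (conic2_collinear (al := - (w1 * t2 - w2 * t1)) (be := w1 * s2 - w2 * s1) Ss St).
- by rewrite oppr_ge0 ltW.
- exact: ltW.
- by ring.
- by nra.
Qed.

(* Were [w] not in [conic2], then, with [X s = w . s] and [Y s = w x s], the
   supremum [sig] of the slopes [X s / Y s] over [Y s > 0] would define a
   half-plane [sig Y - X >= 0] containing [S]. *)
Lemma conic2_all w1 w2 : conic2 w1 w2.
Proof.
have [[-> ->]|wn] := eqVneq (w1, w2) (0, 0).
  have [o1 [o2 [So _]]] : exists s1 s2, S s1 s2 /\ 1 * s1 + 0 * s2 < 0.
    by apply: S_not_halfplane; rewrite xpair_eqE oner_eq0.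
  by exists o1, o2, o1, o2, 0, 0; split; rewrite // !mul0r addr0.
pose X s1 s2 := w1 * s1 + w2 * s2; pose Y s1 s2 := w1 * s2 - w2 * s1.
apply: contrapT => nohull.
have ray s1 s2 : S s1 s2 -> Y s1 s2 = 0 -> X s1 s2 <= 0.
  by move=> Ss Y0; rewrite leNgt; apply/negP => /(conic2_ray Ss Y0).
have slope s1 s2 t1 t2 : S s1 s2 -> S t1 t2 -> 0 < Y s1 s2 -> Y t1 t2 < 0 ->
    X s1 s2 / Y s1 s2 <= X t1 t2 / Y t1 t2.
  by move=> Ss St Ys Yt; rewrite leNgt; apply/negP => /(conic2_pair Ss St Ys Yt).
have [s1 [s2 [Ss Ys]]] : exists s1 s2, S s1 s2 /\ 0 < Y s1 s2.
  have [|s1 [s2 [Ss lt]]] := @S_not_halfplane w2 (- w1).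
    by move: wn; rewrite !xpair_eqE oppr_eq0 andbC.
  by exists s1, s2; split=> //; move: lt; rewrite /Y; lra.
have [t1 [t2 [St Yt]]] : exists t1 t2, S t1 t2 /\ Y t1 t2 < 0.
  have [|t1 [t2 [St lt]]] := @S_not_halfplane (- w2) w1.
    by move: wn; rewrite !xpair_eqE oppr_eq0 andbC.
  by exists t1, t2; split=> //; move: lt; rewrite /Y; lra.
pose E : set R := fun r => exists s1 s2, [/\ S s1 s2, 0 < Y s1 s2 & r = X s1 s2 / Y s1 s2].
have ubE u1 u2 : S u1 u2 -> Y u1 u2 < 0 -> ubound E (X u1 u2 / Y u1 u2).
  by move=> Su Yu r [v1 [v2 [Sv Yv ->]]]; apply: slope.
have E0 : nonempty E by exists (X s1 s2 / Y s1 s2), s1, s2.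
have supE : has_sup E by split=> //; exists (X t1 t2 / Y t1 t2); apply: ubE.
set sig := sup E.
have [|u1 [u2 [Su lt]]] := @S_not_halfplane (- sig * w2 - w1) (sig * w1 - w2).
  apply/negP => /eqP [l1 l2]; move: wn; rewrite xpair_eqE; apply/negP/negPn.
  have : w1 ^+ 2 + w2 ^+ 2 = - ((- sig * w2 - w1) * w1 + (sig * w1 - w2) * w2) by ring.
  rewrite l1 l2 !mul0r addr0 oppr0 => /eqP; rewrite paddr_eq0 ?sqr_ge0 //.
  by rewrite !sqrf_eq0.
have {}lt : sig * Y u1 u2 < X u1 u2 by move: lt; rewrite /X /Y; lra.
case: (ltgtP (Y u1 u2) 0) => [Yu|Yu|Yu].
- have := ge_sup E0 (ubE _ _ Su Yu); rewrite -/sig ler_ndivlMr //; lra.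
- have : X u1 u2 / Y u1 u2 <= sig by apply: sup_upper_bound => //; exists u1, u2.
  rewrite ler_pdivrMr //; lra.
- by have := ray _ _ Su Yu; move: lt; rewrite Yu mulr0; lra.
Qed.

End ConicHull2.

Section PlaneMatrix.
Variables (R : realType) (n : nat).
Implicit Types (M : 'M[R]_n) (f g x : 'cV[R]_n) (a b c s t : R).

Definition plane_mx a b c f g : 'M[R]_n :=
  a *: (f *m f^T) + b *: (f *m g^T + g *m f^T) + c *: (g *m g^T).

Lemma bform_plane_mx a b c f g x :
  bform (plane_mx a b c f g) x x =
  a * dot f x ^+ 2 + 2 * b * dot f x * dot g x + c * dot g x ^+ 2.
Proof. by rewrite !(bformMD, bformMZ, bform_rank1) (dotC x f) (dotC x g); ring. Qed.

Lemma frob_plane_mx M a b c f g : M^T = M ->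
  frob M (plane_mx a b c f g) = a * bform M f f + 2 * b * bform M f g + c * bform M g g.
Proof. by move=> sM; rewrite !(frobD, frobZ, frob_rank1) (bformC g f sM); ring. Qed.

Lemma plane_mx_psd a b c f g : 0 < a -> b ^+ 2 < a * c -> psdmx (plane_mx a b c f g).
Proof.
move=> a0 abc; split=> [|x]; last by rewrite -/(bform _ x x) bform_plane_mx quad2_ge0.
by apply/matrixP => i j; rewrite !mxE !big_ord1 !mxE; ring.
Qed.

Lemma plane_projector f g :
  (forall s t, s *: f + t *: g = 0 -> s = 0 /\ t = 0) ->
  exists E : 'M[R]_n, [/\ E *m f = 0, E *m g = 0 &
                      forall x, E *m x = 0 -> exists s t, x = s *: f + t *: g].
Proof.
move=> indep.
set a := dot f f; set b := dot f g; set c := dot g g; pose G := a * c - b ^+ 2.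
have dotf v u : dot (v *: f + u *: g) f = v * a + u * b.
  by rewrite -bform1 !(bformDl, bformZl) !bform1 (dotC g f).
have dotg v u : dot (v *: f + u *: g) g = v * b + u * c.
  by rewrite -bform1 !(bformDl, bformZl) !bform1.
have G0 : G != 0.
  apply/eqP => G0; have [c0|c0] := eqVneq c 0.
    have := indep 0 1; rewrite scale0r add0r scale1r (dot_eq0 c0).
    by move=> /(_ erefl) [_ /eqP]; rewrite oner_eq0.
  have v0 : c *: f + (- b) *: g = 0.
    apply: dot_eq0; rewrite -bform1 !(bformDr, bformZr) !bform1 dotf dotg.
    by rewrite -[RHS](mulr0 c) -G0 /G; ring.
  by have [/eqP] := indep c (- b) v0; rewrite (negbTE c0).
pose l1 := c *: f + (- b) *: g; pose l2 := (- b) *: f + a *: g.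
have [l1f l1g] : dot l1 f = G /\ dot l1 g = 0 by rewrite dotf dotg /G; split; ring.
have [l2f l2g] : dot l2 f = 0 /\ dot l2 g = G by rewrite dotf dotg /G; split; ring.
(* [E] is [G] times the orthogonal projection onto the complement of the plane,
   [G] being the Gram determinant of [f] and [g]. *)
pose E := G%:M - f *m l1^T - g *m l2^T.
have Ex x : E *m x = G *: x - dot l1 x *: f - dot l2 x *: g.
  by rewrite !mulmxBl mul_scalar_mx -!mulmxA !dot_mx11 !mul_mx_scalar.
exists E; split.
- by rewrite Ex l1f l2f scale0r subr0 subrr.
- by rewrite Ex l1g l2g scale0r subr0 subrr.
- move=> x; rewrite Ex => /eqP; rewrite -addrA -opprD subr_eq0 => /eqP Gx.
  exists (G^-1 * dot l1 x), (G^-1 * dot l2 x).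
  by rewrite -!scalerA -scalerDr -Gx scalerA mulVf // scale1r.
Qed.

End PlaneMatrix.

Section Pencil.
Variables (R : realType) (n : nat) (M1 M2 : 'M[R]_n).
Hypotheses (sM1 : M1^T = M1) (sM2 : M2^T = M2).
Implicit Types (a b c e f g k x y z : 'cV[R]_n).

Definition pdet x y x' y' :=
  det2 (bform M1 x y) (bform M2 x y) (bform M1 x' y') (bform M2 x' y').

Definition isotropic x := bform M1 x x = 0 /\ bform M2 x x = 0.

(* The pencil restricted to the plane of [f] and [g] admits a positive definite
   2x2 matrix orthogonal to both forms, but no isotropic vector. *)
Definition obstruction f g := pdet f f g g ^+ 2 < 4 * pdet f g g g * pdet f f f g.

Lemma Tcone_rank1 x : Tcone M1 M2 (x *m x^T) -> isotropic x.
Proof. by case=> _ [q1 q2]; rewrite /isotropic -!frob_rank1. Qed.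

Lemma obstruction_isotropic_eq0 f g s t :
  obstruction f g -> isotropic (s *: f + t *: g) -> s = 0 /\ t = 0.
Proof.
move=> obs []; rewrite !bform_comb2 //.
exact: plane_isotropic_eq0 obs.
Qed.

Lemma obstruction_indep f g s t :
  obstruction f g -> s *: f + t *: g = 0 -> s = 0 /\ t = 0.
Proof.
move=> obs st0; apply: obstruction_isotropic_eq0 obs _.
by rewrite /isotropic st0 !bform0r.
Qed.

Lemma obstruction_not_ROG f g : obstruction f g -> ~ ROG (Tcone M1 M2).
Proof.
move=> obs rog; have indep := obstruction_indep obs.
have [E [Ef Eg Eker]] := plane_projector indep.
move: obs; rewrite /obstruction.
set d0 := pdet f f g g; set d1 := pdet f g g g; set d2 := pdet f f f g => obs.
have [Z11 Zdet] := cross_coef_posdef obs.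
(* The coefficients form the cross product of [(p_i, 2 b_i, r_i)], scaled by [d1]. *)
pose X := plane_mx (2 * d1 ^+ 2) (- d0 * d1) (2 * d1 * d2) f g.
have TX : Tcone M1 M2 X.
  split; first exact: plane_mx_psd.
  by rewrite !frob_plane_mx // /d0 /d1 /d2 /pdet /det2; split; ring.
have [k [w [u [w0 [_ [Tu EX]]]]]] := proj1 (rog X) TX.
have u0 i : w i != 0 -> u i = 0.
  move=> wi; have Eu : E *m u i = 0.
    apply: rank1_decomp_kernel w0 _ i wi.
    by rewrite -EX frob_plane_mx ?trmx_mul ?trmxK // !bform_gram Ef Eg !dot0l; ring.
  have [s [t ust]] := Eker _ Eu.
  have := Tcone_rank1 (Tu i); rewrite ust => /(obstruction_isotropic_eq0 obs) [-> ->].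
  by rewrite !scale0r addr0.
have X0 : X = 0.
  rewrite EX big1 // => i _; have [->|wi] := eqVneq (w i) 0; first by rewrite scale0r.
  by rewrite u0 // mul0mx scaler0.
have f0 : dot f f != 0.
  apply/eqP => /dot_eq0 f0; have := indep 1 0.
  by rewrite f0 scaler0 scale0r addr0 => /(_ erefl) [/eqP]; rewrite oner_eq0.
have := quad2_gt0 (dot g f) Z11 Zdet f0.
by rewrite -bform_plane_mx -/X X0 /bform mulmx0 mul0mx mxE ltxx.
Qed.

(* As a polynomial in [d], the obstruction margin has no constant term
   (since [k] is isotropic) and linear coefficient [8 pdet y y k y * pdet k y k z]. *)
Lemma obstruction_near_isotropic k y z :
  isotropic k -> pdet y y k y != 0 -> pdet k y k z != 0 ->
  exists d, obstruction y (k + d *: z).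
Proof.
move=> [k1 k2]; rewrite /pdet.
set p1 := bform M1 y y; set p2 := bform M2 y y.
set P1 := bform M1 k y; set P2 := bform M2 k y.
set e1 := bform M1 k z; set e2 := bform M2 k z.
set b1 := bform M1 y z; set b2 := bform M2 y z.
set s1 := bform M1 z z; set s2 := bform M2 z z => yk kz.
pose a0 := det2 p1 p2 P1 P2; pose a1 := det2 p1 p2 b1 b2.
pose g1 := 2 * det2 P1 P2 e1 e2.
pose g2 := det2 P1 P2 s1 s2 + 2 * det2 b1 b2 e1 e2.
pose g3 := det2 b1 b2 s1 s2.
pose h1 := 2 * det2 p1 p2 e1 e2; pose h2 := det2 p1 p2 s1 s2.
have c1n : 4 * a0 * g1 != 0 by rewrite !mulf_neq0 // pnatr_eq0.
have [d d_gt0] := exists_quartic_gt0 (4 * a0 * g2 + 4 * a1 * g1 - h1 ^+ 2)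
   (4 * a0 * g3 + 4 * a1 * g2 - 2 * h1 * h2) (4 * a1 * g3 - h2 ^+ 2) c1n.
exists d; rewrite /obstruction /pdet -subr_gt0.
have byk M : M^T = M -> bform M y (k + d *: z) = bform M k y + d * bform M y z.
  by move=> sM; rewrite bformDr bformZr (bformC y k sM).
have bkk M : M^T = M -> bform M k k = 0 ->
    bform M (k + d *: z) (k + d *: z) = 2 * d * bform M k z + d ^+ 2 * bform M z z.
  by move=> sM kk; rewrite !(bformDl, bformDr, bformZl, bformZr) kk (bformC z k sM); ring.
rewrite !byk // !bkk // -/p1 -/p2 -/P1 -/P2 -/e1 -/e2 -/b1 -/b2 -/s1 -/s2.
by move: d_gt0; rewrite /a0 /a1 /g1 /g2 /g3 /h1 /h2 /det2; congr (0 < _); ring.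
Qed.

Lemma ROG_isotropic_parallel k y1 y2 :
  ROG (Tcone M1 M2) -> isotropic k -> pdet k y1 k y2 != 0 ->
  forall y, pdet y y k y = 0.
Proof.
move=> rog kiso k12 y; apply: contrapT => /eqP yk.
have kyz z : pdet k y k z = 0.
  apply: contrapT => /eqP kz.
  by have [d /obstruction_not_ROG/(_ rog)] := obstruction_near_isotropic kiso yk kz.
have [ky1 ky2] : bform M1 k y = 0 /\ bform M2 k y = 0.
  apply: det2_indep_eq0 k12; last exact: kyz.
  by rewrite -[RHS]oppr0 -(kyz y1) /pdet /det2; ring.
by move: yk; rewrite /pdet ky1 ky2 /det2 !mulr0 subrr eqxx.
Qed.

Lemma pdet_dual_basis k y1 y2 : pdet k y1 k y2 != 0 ->
  exists e f, [/\ bform M1 k e = 1, bform M2 k e = 0, bform M1 k f = 0 & bform M2 k f = 1].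
Proof.
rewrite /pdet /det2; set D := _ - _ => D0.
exists (D^-1 *: (bform M2 k y2 *: y1 - bform M2 k y1 *: y2)),
       (D^-1 *: (bform M1 k y1 *: y2 - bform M1 k y2 *: y1)).
rewrite !(bformZr, bformBr); split.
- have -> : bform M2 k y2 * bform M1 k y1 - bform M2 k y1 * bform M1 k y2 = D.
    by rewrite /D; ring.
  by rewrite mulVf.
- by rewrite [X in _ - X]mulrC subrr mulr0.
- by rewrite [X in _ - X]mulrC subrr mulr0.
- have -> : bform M1 k y1 * bform M2 k y2 - bform M1 k y2 * bform M2 k y1 = D.
    by rewrite /D; ring.
  by rewrite mulVf.
Qed.

(* Writing [y = z + s e + t f] with [b_i(k, z) = 0] turns the hypothesis into a
   cubic identity in [(s, t)]; its coefficients give [q_i(y) = b_i(k, y) (c . y)]. *)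
Lemma parallel_pencil_Symm k y1 y2 :
  pdet k y1 k y2 != 0 -> (forall y, pdet y y k y = 0) ->
  exists c, M1 = Symm ((M1 *m k) *m c^T) /\ M2 = Symm ((M2 *m k) *m c^T).
Proof.
move=> /pdet_dual_basis [e [f [k1e k2e k1f k2f]]] par.
pose c := 2 *: (M1 *m e) - bform M1 e e *: (M1 *m k).
suff fac y : bform M1 y y = dot (M1 *m k) y * dot c y /\
             bform M2 y y = dot (M2 *m k) y * dot c y.
  exists c; split; apply: bform_inj; rewrite ?Symm_rank1_sym // => y;
  by rewrite bform_Symm_rank1; case: (fac y).
rewrite -!bform_dot //; set s := bform M1 k y; set t := bform M2 k y.
have -> : dot c y = 2 * bform M1 e y - bform M1 e e * s.
  by rewrite -bform1 !(bformBl, bformZl) !bform1 -!bform_dot.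
pose z := y - s *: e - t *: f.
have k1z : bform M1 k z = 0 by rewrite /z !(bformBr, bformZr) k1e k1f -/s; ring.
have k2z : bform M2 k z = 0 by rewrite /z !(bformBr, bformZr) k2e k2f -/t; ring.
have ye : y = z + s *: e + t *: f by rewrite /z addrAC subrK subrK.
clearbody z.
have P (p q : R) :
    q * (bform M1 z z + (2 * bform M1 f z) * q + bform M1 f f * q ^+ 2)
  + p * (- bform M2 z z + (- (2 * bform M2 e z)) * p + (- bform M2 e e) * p ^+ 2)
  + p * q * (2 * (bform M1 e z - bform M2 f z) + (bform M1 e e - 2 * bform M2 e f) * p
             + (2 * bform M1 e f - bform M2 f f) * q) = 0.
  have := par (z + p *: e + q *: f).
  rewrite /pdet /det2 !bform_comb3 // !(bformDr, bformZr) k1z k2z k1e k2e k1f k2f => <-.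
  ring.
have [q1z b1fz q1f [q2z b2ez q2e [ez ee ef]]] := poly_cubic2_eq0 P.
have {}b1fz : bform M1 f z = 0 by lra.
have {}q2z : bform M2 z z = 0 by lra.
have {}b2ez : bform M2 e z = 0 by lra.
have {}q2e : bform M2 e e = 0 by lra.
have {}ez : bform M2 f z = bform M1 e z by lra.
have {}ee : bform M1 e e = 2 * bform M2 e f by lra.
have {}ef : bform M2 f f = 2 * bform M1 e f by lra.
rewrite ye !bform_comb3 // !(bformDr, bformZr).
rewrite q1z b1fz q1f q2z b2ez q2e ez ef ee; split; ring.
Qed.

(* [M1 x] and [M2 x] are linearly dependent. *)
Definition degenerate x := forall y1 y2, pdet x y1 x y2 = 0.

Lemma pdet_syml x y x' y' : pdet x y x' y' = pdet y x x' y'.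
Proof. by rewrite /pdet (bformC x y sM1) (bformC x y sM2). Qed.

Lemma pdet_symr x y x' y' : pdet x y x' y' = pdet x y y' x'.
Proof. by rewrite /pdet (bformC x' y' sM1) (bformC x' y' sM2). Qed.

Lemma degenerate_cross0 a b c e :
  degenerate a -> degenerate c -> pdet a b c e != 0 ->
  bform M1 a c = 0 /\ bform M2 a c = 0.
Proof.
move=> da dc abce; apply: det2_indep_eq0 abce; first exact: da.
by rewrite -/(pdet a c c e) pdet_syml; apply: dc.
Qed.

(* Only [b_i(a, b)] and [b_i(c, e)] survive, and the obstruction margin is
   [1024 pdet a b c e ^ 2]. *)
Lemma degenerate_obstruction a b c e :
  isotropic a -> isotropic b -> isotropic c -> isotropic e ->
  degenerate a -> degenerate b -> degenerate c -> degenerate e ->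
  pdet a b c e != 0 ->
  obstruction (a + 2 *: b + 2 *: c) (- a + 2 *: b + 2 *: e).
Proof.
move=> [a1 a2] [b1 b2] [c1 c2] [e1 e2] da db dc de abce.
have sym1 x y : bform M1 y x = bform M1 x y by apply: bformC.
have sym2 x y : bform M2 y x = bform M2 x y by apply: bformC.
have [ac1 ac2] := degenerate_cross0 da dc abce.
have abec : pdet a b e c != 0 by rewrite -pdet_symr.
have bace : pdet b a c e != 0 by rewrite -pdet_syml.
have baec : pdet b a e c != 0 by rewrite -pdet_symr -pdet_syml.
have [ae1 ae2] := degenerate_cross0 da de abec.
have [bc1 bc2] := degenerate_cross0 db dc bace.
have [be1 be2] := degenerate_cross0 db de baec.
move: abce; rewrite /obstruction /pdet /det2.
rewrite !(bformDl, bformDr, bformNl, bformNr, bformZl, bformZr).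
rewrite ?(sym1 a b, sym2 a b, sym1 a c, sym2 a c, sym1 a e, sym2 a e).
rewrite ?(sym1 b c, sym2 b c, sym1 b e, sym2 b e, sym1 c e, sym2 c e).
rewrite a1 a2 b1 b2 c1 c2 e1 e2 ac1 ac2 ae1 ae2 bc1 bc2 be1 be2.
set P1 := bform M1 a b; set P2 := bform M2 a b; set R1 := bform M1 c e; set R2 := bform M2 c e.
move=> abce; set L := (X in X < _); set Rr := (X in _ < X).
have -> : L = 0 by rewrite /L; ring.
have -> : Rr = 1024 * (P1 * R2 - P2 * R1) ^+ 2 by rewrite /Rr; ring.
by rewrite pmulr_rgt0 // exprn_even_gt0.
Qed.

Lemma parallel_span_comb0 (m : nat) (u : 'I_m -> 'cV[R]_n) :
  (forall y, exists c : 'I_m -> R, y = \sum_i c i *: u i) ->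
  (forall i j i' j', pdet (u i) (u j) (u i') (u j') = 0) ->
  exists a1 a2 : R, (a1, a2) != (0, 0) /\ a1 *: M1 + a2 *: M2 = 0.
Proof.
move=> span par.
have [D1 [D2 [D0 parD]]] : exists D1 D2 : R, (D1, D2) != (0, 0) /\
    forall i j, det2 D1 D2 (bform M1 (u i) (u j)) (bform M2 (u i) (u j)) = 0.
  have [[i [j ij0]]|all0] := pselect (exists i j,
      (bform M1 (u i) (u j), bform M2 (u i) (u j)) != (0, 0)).
    by exists (bform M1 (u i) (u j)), (bform M2 (u i) (u j)); split=> // *; apply: par.
  exists 1, 0; split; first by rewrite xpair_eqE oner_eq0.
  move=> i j; have /eqP[-> ->] : (bform M1 (u i) (u j), bform M2 (u i) (u j)) == (0, 0).
    by apply/negPn/negP => ij0; apply: all0; exists i, j.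
  by rewrite /det2; ring.
exists D2, (- D1); split; first by move: D0; rewrite !xpair_eqE oppr_eq0 andbC.
apply/eqP; rewrite scaleNr subr_eq0; apply/eqP.
apply: bform_inj => [||y]; rewrite ?linearZ /= ?sM1 ?sM2 //.
have [c ->] := span y; rewrite !bformMZ !bform_lincomb !mulr_sumr; apply: eq_bigr => i _.
rewrite !mulr_sumr; apply: eq_bigr => j _.
apply/eqP; rewrite -subr_eq0; apply/eqP.
by rewrite -[RHS](mulr0 (- (c i * c j))) -(parD i j) /det2; ring.
Qed.

(* Writing [-(tr M1, tr M2)] as a conic combination of two points [(q_1 v, q_2 v)]
   of the image of the pencil gives [X = I + mu v1 v1^T + nu v2 v2^T]. *)
Lemma Tcone_unitmx :
  ~ (exists a1 a2 : R, (a1, a2) != (0, 0) /\ psdmx (a1 *: M1 + a2 *: M2)) ->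
  exists X, Tcone M1 M2 X /\ X \in unitmx.
Proof.
move=> nopsd.
pose S s1 s2 := exists v, s1 = bform M1 v v /\ s2 = bform M2 v v.
have S_not_halfplane l1 l2 : (l1, l2) != (0, 0) ->
    exists s1 s2, S s1 s2 /\ l1 * s1 + l2 * s2 < 0.
  move=> l0; apply: contrapT => allge; apply: nopsd; exists l1, l2; split=> //; split.
    by rewrite /symmx linearD !linearZ /= sM1 sM2.
  move=> x; rewrite -/(bform _ x x) bformMD !bformMZ leNgt; apply/negP => neg.
  by apply: allge; exists (bform M1 x x), (bform M2 x x); split=> //; exists x.
have [a1 [a2 [b1 [b2 [mu [nu [[v1 [-> ->]] [v2 [-> ->]] mu0 nu0 [tr1 tr2]]]]]]]] :=
  conic2_all S_not_halfplane (- \tr M1) (- \tr M2).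
pose X := 1%:M + mu *: (v1 *m v1^T) + nu *: (v2 *m v2^T).
have bformX x : bform X x x = dot x x + mu * dot v1 x ^+ 2 + nu * dot v2 x ^+ 2.
  by rewrite !(bformMD, bformMZ, bform_rank1) bform1 (dotC x v1) (dotC x v2) !expr2.
have dotX x : dot x x <= bform X x x.
  by rewrite bformX -addrA lerDl addr_ge0 // mulr_ge0 // sqr_ge0.
exists X; split; last exact: unitmx_of_dot_le_bform.
split; [split=> [|x] | split].
- by rewrite /symmx !linearD !linearZ /= !trmx_mul !trmxK trmx1.
- exact: le_trans (dot_ge0 x) (dotX x).
- by rewrite !(frobD, frobZ, frob_rank1) frob1; lra.
- by rewrite !(frobD, frobZ, frob_rank1) frob1; lra.
Qed.

End Pencil.

Theorem theorem4p2 (R : realType) (n : nat) (M1 M2 : 'M[R]_n) :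
  symmx M1 -> symmx M2 ->
  ROG (Tcone M1 M2) ->
  (exists a1 a2 : R, (a1, a2) != (0, 0) /\ psdmx (a1 *: M1 + a2 *: M2)) \/
  (exists a b c : 'cV[R]_n,
      M1 = Symm (a *m c^T) /\ M2 = Symm (b *m c^T)).
Proof.
move=> sM1 sM2 rog.
have [|nopsd] := pselect (exists a1 a2 : R,
  (a1, a2) != (0, 0) /\ psdmx (a1 *: M1 + a2 *: M2)); first by left.
have [X [TX Xu]] := Tcone_unitmx sM1 sM2 nopsd.
have [k [w [u [w0 [_ [Tu EX]]]]]] := proj1 (rog X) TX.
have iso i : isotropic M1 M2 (u i) := Tcone_rank1 (Tu i).
have [[i [y1 [y2 nondeg]]]|alldeg] :=
  pselect (exists i y1 y2, pdet M1 M2 (u i) y1 (u i) y2 != 0).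
  right; have par := ROG_isotropic_parallel sM1 sM2 rog (iso i) nondeg.
  have [c [E1 E2]] := parallel_pencil_Symm sM1 sM2 nondeg par.
  by exists (M1 *m u i), (M2 *m u i), c.
left.
have deg i : degenerate M1 M2 (u i).
  by move=> y1 y2; apply: contrapT => /eqP nz; apply: alldeg; exists i, y1, y2.
have par i j i' j' : pdet M1 M2 (u i) (u j) (u i') (u j') = 0.
  apply: contrapT => /eqP nz; apply: (obstruction_not_ROG sM1 sM2) rog.
  exact: degenerate_obstruction (iso i) (iso j) (iso i') (iso j')
    (deg i) (deg j) (deg i') (deg j') nz.
have [a1 [a2 [a0 comb0]]] := parallel_span_comb0 sM1 sM2 (rank1_decomp_span Xu EX) par.
by exists a1, a2; rewrite comb0; split=> //; apply: psdmx0.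
Qed.
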